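(* Let $A\in\mathbb{R}^{m\times m}$ be positive definite, $B\in\mathbb{R}^{m\times n}$ ($n\le m$), $\alpha\ge0$, $\beta>0$. Then every eigenvalue $\lambda$ of $\mathcal{P}_{MGSSP}^{-1}\mathcal{A}$ satisfies $|\lambda-\tfrac12|\le\tfrac12$. If moreover $B$ has full column rank, then every eigenvalue of $\mathcal{P}_{MGSSP}^{-1}\mathcal{A}$ has positive real part.
   Context: A real square matrix $A$ is called positive definite if $x^TAx>0$ for all nonzero $x\in\mathbb{R}^m$ ($A$ need not be symmetric). $\mathcal{A}=\begin{pmatrix}A & B\\ -B^T & 0\end{pmatrix}$ and, for $\alpha\ge0,\beta>0$, $\mathcal{P}_{MGSSP}=\begin{pmatrix}\alpha I+2A & 2B\\ -2B^T & \beta I\end{pmatrix}$ (which is nonsingular). *)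

(* Complex numbers: an arbitrary numClosedFieldType C (e.g. C = complex
   numbers); real numbers/matrices are those with entries in Num.real. *)
From HB Require Import structures.
From mathcomp Require Import all_boot all_order all_algebra.
Set Implicit Arguments. Unset Strict Implicit. Unset Printing Implicit Defensive.
Import Order.TTheory GRing.Theory Num.Theory.
Local Open Scope ring_scope.

(* real positive definite (not necessarily symmetric): x^T A x > 0 for all real x <> 0 *)
Definition posdef (C : numClosedFieldType) (m : nat) (A : 'M[C]_m) : Prop :=
  forall x : 'cV[C]_m, x \is a mxOver Num.real -> x != 0 -> 0 < (x^T *m A *m x) 0 0.

Definition saddleA (C : numClosedFieldType) (m n : nat)
  (A : 'M[C]_m) (B : 'M[C]_(m, n)) : 'M[C]_(m + n) :=
  block_mx A B (- B^T) 0.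

Definition P_MGSSP (C : numClosedFieldType) (m n : nat)
  (A : 'M[C]_m) (B : 'M[C]_(m, n)) (alpha beta : C) : 'M[C]_(m + n) :=
  block_mx (alpha%:M + 2%:R *: A) (2%:R *: B) (- (2%:R *: B^T)) (beta%:M).

(* Write P = 2 S + D, where S is the saddle point matrix and D = diag(alpha I, beta I).
   A left eigenvector w of P^-1 S for the eigenvalue l satisfies w S = l w P, so that
   q = l (2 q + d) with q = w S w^* and d = w D w^* >= 0.  Because B is real, the skew
   blocks of S cancel in q + q^* = x (A + A^T) x^*, hence Re q >= 0, and Re q and d cannot
   both vanish.  This forces l into the disk |l - 1/4| <= 1/4, which lies in
   |l - 1/2| <= 1/2 and touches the imaginary axis only at 0; when B has full column rank
   S is nonsingular, so l <> 0. *)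

From HB Require Import structures.
From mathcomp Require Import all_boot all_order all_algebra.
From mathcomp Require Import ring.
Set Implicit Arguments. Unset Strict Implicit. Unset Printing Implicit Defensive.
Import Order.TTheory GRing.Theory Num.Theory Num.Def.
Local Open Scope ring_scope.
Local Open Scope sesquilinear_scope.

Section RealForms.
Variable C : numClosedFieldType.
Implicit Types (k : nat).

Lemma form_trmx_realmx k (M : 'M[C]_k) u v :
  u \is a realmx -> v \is a realmx -> form conjC M u v = form conjC M^T v u.
Proof.
move=> uR vR; rewrite /form -trace_mx11 -mxtrace_tr trace_mx11 !trmx_mul.
by rewrite -map_trmx trmxK -[u^T^conjC]map_trmx !realmxC // mulmxA.
Qed.

Lemma form_conj_realmx k (M : 'M[C]_k) u v :
  M \is a realmx -> (form conjC M u v)^* = form conjC M^T v u.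
Proof.
move=> MR.
have -> : forall X : 'M[C]_1, (X 0 0)^* = (map_mx conjC X) 0 0 by move=> X; rewrite mxE.
rewrite /form !map_mxM (realmxC MR).
have -> : map_mx conjC (v ^t conjC) = v^T by apply/matrixP=> i j; rewrite !mxE conjCK.
by rewrite -trace_mx11 -mxtrace_tr trace_mx11 !trmx_mul trmxK map_trmx mulmxA.
Qed.

Lemma form_addmx k (M N : 'M[C]_k) u v :
  form conjC (M + N) u v = form conjC M u v + form conjC N u v.
Proof. by rewrite /form mulmxDr mulmxDl mxE. Qed.

Lemma form_scalemx k a (M : 'M[C]_k) u v :
  form conjC (a *: M) u v = a * form conjC M u v.
Proof. by rewrite /form -scalemxAr -scalemxAl mxE. Qed.

Lemma form_scalar_mx k a (u v : 'rV[C]_k) : form conjC a%:M u v = a * dotmx u v.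
Proof. by rewrite -scalemx1 form_scalemx dotmxE /form mulmx1. Qed.

Lemma form_block_diag p q (M : 'M[C]_p) (N : 'M[C]_q) x y x' y' :
  form conjC (block_mx M 0 0 N) (row_mx x y) (row_mx x' y') =
  form conjC M x x' + form conjC N y y'.
Proof.
by rewrite /form mul_row_block !mulmx0 addr0 add0r tr_row_mx map_col_mx mul_row_col mxE.
Qed.

Lemma form_add_conj_realmx k (M : 'M[C]_k) u : M \is a realmx ->
  form conjC M u u + (form conjC M u u)^* = form conjC (M + M^T) u u.
Proof. by move=> MR; rewrite form_conj_realmx // form_addmx. Qed.

Lemma realmx_Re p q (M : 'M[C]_(p, q)) : map_mx (@Re C) M \is a realmx.
Proof. by apply/mxOverP=> i j; rewrite mxE Creal_Re. Qed.

Lemma realmx_Im p q (M : 'M[C]_(p, q)) : map_mx (@Im C) M \is a realmx.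
Proof. by apply/mxOverP=> i j; rewrite mxE Creal_Im. Qed.

Lemma mx_Crect p q (M : 'M[C]_(p, q)) : M = map_mx (@Re C) M + 'i *: map_mx (@Im C) M.
Proof. by apply/matrixP=> i j; rewrite !mxE -Crect. Qed.

Lemma form_realmx_sym k (S : 'M[C]_k) x : S \is a realmx -> S^T = S ->
  form conjC S x x = form conjC S (map_mx (@Re C) x) (map_mx (@Re C) x)
                   + form conjC S (map_mx (@Im C) x) (map_mx (@Im C) x).
Proof.
move=> SR Ssym; have rR := realmx_Re x; have sR := realmx_Im x.
rewrite {1 2}[x]mx_Crect !(formDl, formDr, formZl, formZr) /= conjCi.
rewrite (form_trmx_realmx S sR rR) Ssym.
by rewrite mulrA mulrN -expr2 sqrCi; ring.
Qed.

Lemma realmx_trmx p q (M : 'M[C]_(p, q)) : M \is a realmx -> M^T \is a realmx.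
Proof. by move=> /mxOverP MR; apply/mxOverP=> i j; rewrite mxE. Qed.

Section PosDef.
Variables (k : nat) (A : 'M[C]_k).
Hypotheses (AR : A \is a realmx) (pA : posdef A).

Lemma posdef_form_realmx_gt0 r : r \is a realmx -> r != 0 ->
  0 < form conjC (A + A^T) r r.
Proof.
move=> rR r0; rewrite form_addmx [form _ A^T _ _]form_trmx_realmx // trmxK.
have : 0 < form conjC A r r.
  rewrite /form -map_trmx realmxC //; have := pA (realmx_trmx rR); rewrite trmxK.
  by apply; rewrite trmx_eq0.
by move=> Apos; rewrite addr_gt0.
Qed.

Lemma posdef_form_gt0 x : x != 0 -> 0 < form conjC (A + A^T) x x.
Proof.
move=> x0; have SR : A + A^T \is a realmx by rewrite realmxD ?realmx_trmx.
rewrite form_realmx_sym //; last by rewrite linearD /= trmxK addrC.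
have ge0 u : u \is a realmx -> 0 <= form conjC (A + A^T) u u.
  move=> uR; have [->|/(posdef_form_realmx_gt0 uR)/ltW //] := eqVneq u 0.
  by rewrite form0l.
have [Re0|ReNZ] := eqVneq (map_mx (@Re C) x) 0; last first.
  by rewrite ltr_wpDr ?ge0 ?realmx_Im ?posdef_form_realmx_gt0 ?realmx_Re.
have ImNZ : map_mx (@Im C) x != 0.
  by apply: contra x0 => /eqP Im0; rewrite [x]mx_Crect Re0 Im0 scaler0 addr0.
by rewrite Re0 form0l add0r posdef_form_realmx_gt0 ?realmx_Im.
Qed.

Lemma posdef_form_ge0 x : 0 <= form conjC (A + A^T) x x.
Proof.
have [->|/posdef_form_gt0/ltW //] := eqVneq x 0.
by rewrite form0l.
Qed.

End PosDef.

End RealForms.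

Section QuarterDisk.
Variable C : numClosedFieldType.
Implicit Types (q d l : C).

(* The closed disk |l - 1/4| <= 1/4. *)
Definition in_quarter_disk l := 4%:R * (l * l^*) <= l + l^*.

Lemma ratio_in_quarter_disk q d l :
  0 <= q + q^* -> 0 <= d -> 0 < q + q^* + d -> q = l * (2%:R * q + d) ->
  in_quarter_disk l.
Proof.
move=> q_ge0 d_ge0 pos E.
have dC : d^* = d by apply/conj_Creal/ger0_real.
have E' : q^* = l^* * (2%:R * q^* + d).
  by rewrite {1}E rmorphM rmorphD rmorphM rmorph_nat /= dC.
set g := l + l^* - 4%:R * (l * l^*).
set N := (1 - 2%:R * l) * (1 - 2%:R * l)^*.
(* Combine [q (1 - 2 l) = l d] with its conjugate; the cross terms cancel. *)
have key : d * g = N * (q + q^*).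
  have NE : N = (1 - 2%:R * l) * (1 - 2%:R * l^*).
    by rewrite /N rmorphB rmorph1 rmorphM rmorph_nat.
  apply/eqP; rewrite -subr_eq0 NE; apply/eqP.
  transitivity (- ((1 - 2%:R * l^*) * (q - l * (2%:R * q + d))
                 + (1 - 2%:R * l) * (q^* - l^* * (2%:R * q^* + d)))).
    by rewrite /g; ring.
  by rewrite -E -E' !subrr !mulr0 addr0 oppr0.
rewrite /in_quarter_disk -subr_ge0 -/g; have N_ge0 : 0 <= N by exact: mul_conjC_ge0.
have [d0|d_neq0] := eqVneq d 0; last first.
  have d_gt0 : 0 < d by rewrite lt_def d_neq0 d_ge0.
  by rewrite -(pmulr_rge0 _ d_gt0) key mulr_ge0.
have q_gt0 : 0 < q + q^* by move: pos; rewrite d0 addr0.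
move/eqP: key; rewrite d0 mul0r eq_sym mulf_eq0 (gt_eqF q_gt0) orbF.
rewrite mul_conjC_eq0 subr_eq0 => /eqP/esym l_half.
have l_half' : 2%:R * l^* = 1.
  by have := congr1 conjC l_half; rewrite rmorphM rmorph_nat rmorph1.
have : g * 2%:R = 0.
  transitivity (2%:R * l + 2%:R * l^* - (2%:R * l) * (2%:R * l^*) * 2%:R).
    by rewrite /g; ring.
  by rewrite l_half l_half'; ring.
by move/eqP; rewrite mulf_eq0 pnatr_eq0 orbF => /eqP ->.
Qed.

Lemma in_quarter_disk_sub_half l : in_quarter_disk l -> `|l - 2%:R^-1| <= 2%:R^-1.
Proof.
move=> disk; have c2 : (2%:R^-1 : C)^* = 2%:R^-1.
  by rewrite conj_Creal // ger0_real // invr_ge0 ler0n.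
rewrite -ler_sqr ?nnegrE ?invr_ge0 ?ler0n // normCK rmorphB /= c2 -subr_ge0.
have -> : 2%:R^-1 ^+ 2 - (l - 2%:R^-1) * (l^* - 2%:R^-1) =
          (l + l^* - 4%:R * (l * l^*)) / 2%:R + l * l^* by field.
by rewrite addr_ge0 ?divr_ge0 ?ler0n ?subr_ge0 ?mul_conjC_ge0.
Qed.

Lemma in_quarter_disk_Re_gt0 l : in_quarter_disk l -> l != 0 -> 0 < 'Re l.
Proof.
move=> disk l0; rewrite ReE divr_gt0 ?ltr0n // (lt_le_trans _ disk) //.
by rewrite mulr_gt0 ?ltr0n ?mul_conjC_gt0.
Qed.

End QuarterDisk.

Lemma eigenvalue_invmx_mulmx (F : fieldType) k (M N : 'M[F]_k) l :
  M \in unitmx -> eigenvalue (invmx M *m N) l ->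
  exists2 w : 'rV_k, w != 0 & w *m N = l *: (w *m M).
Proof.
move=> Mu /eigenvalueP [v hv v0]; exists (v *m invmx M).
  by apply: contraNneq v0 => w0; rewrite -(mulmxKV Mu v) w0 mul0mx.
by rewrite -mulmxA hv mulmxKV.
Qed.

Lemma eigenvalue_unitmx_neq0 (F : fieldType) k (M : 'M[F]_k) l :
  M \in unitmx -> eigenvalue M l -> l != 0.
Proof.
move=> Mu /eigenvalueP [v hv v0]; apply: contraNneq v0 => l0.
by rewrite -(mulmxK Mu v) hv l0 scale0r mul0mx.
Qed.

Section Saddle.
Variables (C : numClosedFieldType) (m n : nat).
Variables (A : 'M[C]_m) (B : 'M[C]_(m, n)) (alpha beta : C).

Local Notation S := (saddleA A B).
Local Notation P := (P_MGSSP A B alpha beta).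
Local Notation D := (block_mx alpha%:M 0 0 beta%:M : 'M[C]_(m + n)).

Lemma P_MGSSPE : P = 2%:R *: S + D.
Proof.
rewrite /P_MGSSP /saddleA scale_block_mx add_block_mx scalerN.
by rewrite scaler0 !addr0 add0r addrC.
Qed.

Lemma P_MGSSP_form w : form conjC P w w = 2%:R * form conjC S w w + form conjC D w w.
Proof. by rewrite P_MGSSPE form_addmx form_scalemx. Qed.

Lemma shift_form x y :
  form conjC D (row_mx x y) (row_mx x y) = alpha * dotmx x x + beta * dotmx y y.
Proof. by rewrite form_block_diag !form_scalar_mx. Qed.

Hypotheses (AR : A \is a realmx) (BR : B \is a realmx) (pA : posdef A).
Hypotheses (alpha_ge0 : 0 <= alpha) (beta_gt0 : 0 < beta).

Lemma saddleA_realmx : S \is a realmx.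
Proof.
have SC : map_mx conjC S = S.
  by rewrite /saddleA map_block_mx map_mxN -map_trmx !realmxC ?mxOver0 ?rpred0.
by apply/mxOverP=> i j; apply/CrealP; rewrite -[in RHS]SC [RHS]mxE.
Qed.

Lemma saddleA_form_add_conj x y :
  form conjC S (row_mx x y) (row_mx x y) + (form conjC S (row_mx x y) (row_mx x y))^*
  = form conjC (A + A^T) x x.
Proof.
rewrite form_add_conj_realmx ?saddleA_realmx //.
have -> : S + S^T = block_mx (A + A^T) 0 0 0.
  by rewrite /saddleA tr_block_mx trmx0 linearN /= trmxK add_block_mx subrr addNr addr0.
by rewrite form_block_diag [form _ 0 _ _]form0_eq0 ?addr0.
Qed.

Lemma saddleA_form_add_conj_ge0 w :
  0 <= form conjC S w w + (form conjC S w w)^*.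
Proof. by rewrite -[w]hsubmxK saddleA_form_add_conj posdef_form_ge0. Qed.

Lemma shift_form_ge0 w : 0 <= form conjC D w w.
Proof.
rewrite -[w]hsubmxK shift_form.
by rewrite addr_ge0 // mulr_ge0 ?(ltW beta_gt0) // (dnorm_ge0 (@dotmx C _)).
Qed.

Lemma saddle_shift_form_gt0 w : w != 0 ->
  0 < form conjC S w w + (form conjC S w w)^* + form conjC D w w.
Proof.
rewrite -[w]hsubmxK saddleA_form_add_conj shift_form.
set x := lsubmx w; set y := rsubmx w => w0.
have ax_ge0 : 0 <= alpha * dotmx x x by rewrite mulr_ge0 // (dnorm_ge0 (@dotmx C _)).
have [x0|/(posdef_form_gt0 AR pA) pos] := eqVneq x 0; last first.
  by rewrite ltr_wpDr // -shift_form shift_form_ge0.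
have y0 : y != 0 by apply: contraNneq w0 => y0; rewrite x0 y0 row_mx0.
rewrite ltr_wpDl ?posdef_form_ge0 // ltr_wpDl // mulr_gt0 //.
by rewrite (dnorm_gt0 (@dotmx C _)).
Qed.

Lemma P_MGSSP_unit : P \in unitmx.
Proof.
rewrite -row_free_unit; apply: inj_row_free => w wP0; apply/eqP/contraT => w0.
have := saddle_shift_form_gt0 w0.
have : form conjC P w w = 0 by rewrite /form wP0 mul0mx mxE.
rewrite P_MGSSP_form; set q := form conjC S w w; set d := form conjC D w w => E.
have dC : d^* = d by apply/conj_Creal/ger0_real/shift_form_ge0.
have : 2%:R * (q + q^* + d) = 0.
  transitivity (2%:R * q + d + (2%:R * q + d)^*); last by rewrite E rmorph0 addr0.
  by rewrite rmorphD rmorphM rmorph_nat /= dC; ring.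
by move/eqP; rewrite mulf_eq0 pnatr_eq0 /= => /eqP ->; rewrite ltxx.
Qed.

Lemma saddleA_unit : \rank B = n -> S \in unitmx.
Proof.
move=> rankB; rewrite -row_free_unit; apply: inj_row_free => w.
rewrite -[w]hsubmxK; set x := lsubmx w; set y := rsubmx w => wS0.
have x0 : x = 0.
  apply/eqP/contraT => /(posdef_form_gt0 AR pA); rewrite -(saddleA_form_add_conj x y).
  by rewrite /form wS0 mul0mx mxE rmorph0 addr0 ltxx.
move: wS0; rewrite /saddleA mul_row_block x0 !mul0mx !add0r mulmx0 mulmxN.
rewrite -row_mx0 => /eq_row_mx [/eqP]; rewrite oppr_eq0 => /eqP yB0 _.
have BT_free : row_free B^T by rewrite /row_free mxrank_tr rankB.
have y0 : y = 0 by apply: (row_free_inj BT_free); rewrite yB0 mul0mx.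
by rewrite y0 row_mx0.
Qed.

Lemma MGSSP_eigenvalue_in_quarter_disk l :
  eigenvalue (invmx P *m S) l -> in_quarter_disk l.
Proof.
move=> /(eigenvalue_invmx_mulmx P_MGSSP_unit) [w w0 wSP].
apply: (ratio_in_quarter_disk (saddleA_form_add_conj_ge0 w) (shift_form_ge0 w)).
  exact: saddle_shift_form_gt0.
by rewrite -P_MGSSP_form /form wSP -scalemxAl mxE.
Qed.

End Saddle.

Theorem mainTheorem9 (C : numClosedFieldType) (m n : nat)
  (A : 'M[C]_m) (B : 'M[C]_(m, n)) (alpha beta : C) :
  A \is a mxOver Num.real -> B \is a mxOver Num.real ->
  posdef A -> (n <= m)%N -> 0 <= alpha -> 0 < beta ->
  (forall lambda : C,
     eigenvalue (invmx (P_MGSSP A B alpha beta) *m saddleA A B) lambda ->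
     `|lambda - 2%:R^-1| <= 2%:R^-1) /\
  (\rank B = n ->
   forall lambda : C,
     eigenvalue (invmx (P_MGSSP A B alpha beta) *m saddleA A B) lambda ->
     0 < 'Re lambda).
Proof.
move=> AR BR pA _ alpha_ge0 beta_gt0.
have disk := MGSSP_eigenvalue_in_quarter_disk AR BR pA alpha_ge0 beta_gt0.
split=> [l /disk/in_quarter_disk_sub_half // | rankB l eig_l].
apply: in_quarter_disk_Re_gt0 (disk _ eig_l) _.
apply: eigenvalue_unitmx_neq0 eig_l.
by rewrite unitmx_mul unitmx_inv P_MGSSP_unit // saddleA_unit.
Qed.
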